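(* Let the alphabet be countable, $\mathcal S$ the set of sentences, $\widehat{\mathcal I}$ the set of separating interpretations, and $\widehat{\mathcal B}$ the Borel $\sigma$-algebra on $\widehat{\mathcal I}$. Let $\mu:\mathcal S\to\mathbb R$ be a Gaifman probability on sentences. Then there exists a unique (countably additive) probability measure $\widehat\mu^*:\widehat{\mathcal B}\to\mathbb R$ such that $\widehat\mu^*(\widehat{\mathrm{Mod}}(\varphi))=\mu(\varphi)$ for each $\varphi\in\mathcal S$.
   Context: Setting: higher-order logic (Church's simple theory of types, without a description operator), with Henkin semantics: an interpretation $I$ consists of domains $D_\alpha$ ($D_o=\{\mathsf T,\mathsf F\}$, $D_{\alpha\to\beta}$ a set of functions) and a valuation of constants (equality denoting identity) such that every term has a denotation; $V(t,I)$ is the denotation of a closed term $t$. An alphabet is countable if its set of constants is countable. Sentences are closed terms of type $o$; a sentence is valid if true in every interpretation. $I$ is separating if for every pair $r,s$ of closed terms of the same function type $\alpha\to\beta$ with $V(r,I)\neq V(s,I)$ there is a closed term $t$ of type $\alpha$ (over the alphabet) with $V((r\,t),I)\neq V((s\,t),I)$. $\widehat{\mathrm{Mod}}(\varphi)=\{I\in\widehat{\mathcal I}:\varphi\text{ is valid in }I\}$; these sets form a basis of a topology on $\widehat{\mathcal I}$ and $\widehat{\mathcal B}$ is its Borel $\sigma$-algebra. A probability on sentences is a non-negative $\mu:\mathcal S\to\mathbb R$ with $\mu(\varphi)=1$ for valid $\varphi$ and $\mu(\varphi\vee\psi)=\mu(\varphi)+\mu(\psi)$ whenever $\neg(\varphi\wedge\psi)$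 is valid. $\mu$ is Gaifman if for every pair $r,s$ of closed terms of the same function type $\alpha\to\beta$, $\mu(r=s)=\inf_{\{t_1,\dots,t_n\}}\mu(\bigwedge_{i=1}^n((r\,t_i)=(s\,t_i)))$ over all finite sets of closed terms of type $\alpha$. *)

From Stdlib Require Import Reals List.
Open Scope R_scope.

Set Implicit Arguments.

(** Types over a set [B] of base type symbols; [TBool] is the type [o]. *)
Inductive ty (B : Type) : Type :=
| TBase : B -> ty B
| TBool : ty B
| TArr : ty B -> ty B -> ty B.
Arguments TBool {B}.

Inductive var {B : Type} : list (ty B) -> ty B -> Type :=
| Vz : forall G a, var (a :: G) a
| Vs : forall G a b, var G a -> var (b :: G) a.

Section Syntax.
Variables (B C : Type) (cty : C -> ty B).

Inductive tm (G : list (ty B)) : ty B -> Type :=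
| Var : forall a, var G a -> tm G a
| Con : forall c : C, tm G (cty c)
| EqC : forall a, tm G (TArr a (TArr a TBool))
| NegC : tm G (TArr TBool TBool)
| OrC : tm G (TArr TBool (TArr TBool TBool))
| AndC : tm G (TArr TBool (TArr TBool TBool))
| PiC : forall a, tm G (TArr (TArr a TBool) TBool)
| App : forall a b, tm G (TArr a b) -> tm G a -> tm G b
| Lam : forall a b, tm (a :: G) b -> tm G (TArr a b).

Definition ctm (a : ty B) := tm nil a.
Definition sentence := tm nil TBool.

Definition tEq {G a} (s t : tm G a) : tm G TBool := App (App (EqC G a) s) t.
Definition tNeg {G} (s : tm G TBool) : tm G TBool := App (NegC G) s.
Definition tOr {G} (s t : tm G TBool) : tm G TBool := App (App (OrC G) s) t.
Definition tAnd {G} (s t : tm G TBool) : tm G TBool := App (App (AndC G) s) t.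
(** A fixed valid sentence, used as the empty conjunction. *)
Definition tTop : sentence := tEq (NegC nil) (NegC nil).
Fixpoint bigAnd (l : list sentence) : sentence :=
  match l with nil => tTop | s :: l' => tAnd s (bigAnd l') end.

Fixpoint env (D : ty B -> Type) (G : list (ty B)) : Type :=
  match G with nil => unit | a :: G' => (D a * env D G')%type end.

Fixpoint lookup (D : ty B -> Type) G a (v : var G a) : env D G -> D a :=
  match v in var G a return env D G -> D a with
  | Vz G a => fun e => fst e
  | Vs _ v' => fun e => lookup D v' (snd e)
  end.

(** A Henkin interpretation: domains [D a] (nonempty on base types), with
    [D o] identified with the truth values via the bijection [tv], and
    [D (a -> b)] a set of functions [D a -> D b], presented extensionally
    through the application map [app]; a valuation [cval] of the constants;
    and the (necessarily unique) denotation function [den] satisfying the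
    usual clauses, whose existence expresses that every term has a
    denotation. *)
Record interp : Type := {
  D : ty B -> Type;
  D_base_ne : forall b, inhabited (D (TBase b));
  tv : D TBool -> bool;
  tv_inj : forall x y, tv x = tv y -> x = y;
  tv_surj : forall b, exists x, tv x = b;
  app : forall a b, D (TArr a b) -> D a -> D b;
  app_ext : forall a b (f g : D (TArr a b)), (forall x, app f x = app g x) -> f = g;
  cval : forall c : C, D (cty c);
  den : forall G a, tm G a -> env D G -> D a;
  den_var : forall G a (v : var G a) e, den (Var v) e = lookup D v e;
  den_con : forall G c e, den (Con G c) e = cval c;
  den_app : forall G a b (s : tm G (TArr a b)) (t : tm G a) e,
      den (App s t) e = app (den s e) (den t e);
  den_lam : forall G a b (t : tm (a :: G) b) e x,
      app (den (Lam t) e) x = den t (x, e);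
  den_eq : forall G a e (x y : D a),
      tv (app (app (den (EqC G a) e) x) y) = true <-> x = y;
  den_neg : forall G e x, tv (app (den (NegC G) e) x) = negb (tv x);
  den_or : forall G e x y,
      tv (app (app (den (OrC G) e) x) y) = orb (tv x) (tv y);
  den_and : forall G e x y,
      tv (app (app (den (AndC G) e) x) y) = andb (tv x) (tv y);
  den_pi : forall G a e (f : D (TArr a TBool)),
      tv (app (den (PiC G a) e) f) = true <-> forall x, tv (app f x) = true
}.

Definition V (I : interp) {a} (t : ctm a) : D I a := den I t tt.

Definition true_in (I : interp) (phi : sentence) : Prop := tv I (V I phi) = true.

Definition valid (phi : sentence) : Prop := forall I : interp, true_in I phi.

Definition separating (I : interp) : Prop :=
  forall a b (r s : ctm (TArr a b)), V I r <> V I s ->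
    exists t : ctm a, V I (App r t) <> V I (App s t).

Definition sep_interp : Type := { I : interp | separating I }.

Definition Mod (phi : sentence) : sep_interp -> Prop :=
  fun I => true_in (proj1_sig I) phi.

Definition hat_open (U : sep_interp -> Prop) : Prop :=
  exists F : sentence -> Prop, forall I, U I <-> exists phi, F phi /\ Mod phi I.

Definition prob_on_sentences (mu : sentence -> R) : Prop :=
  (forall phi, 0 <= mu phi) /\
  (forall phi, valid phi -> mu phi = 1) /\
  (forall phi psi, valid (tNeg (tAnd phi psi)) -> mu (tOr phi psi) = mu phi + mu psi).

(** Gaifman condition: [mu (r = s)] is the infimum, over finite families
    [t_1, ..., t_n] of closed terms, of [mu (/\_i (r t_i = s t_i))]
    (the empty conjunction being the valid sentence [tTop]). *)
Definition gaifman (mu : sentence -> R) : Prop :=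
  forall a b (r s : ctm (TArr a b)),
    let conj l := bigAnd (map (fun t => tEq (App r t) (App s t)) l) in
    (forall l : list (ctm a), mu (tEq r s) <= mu (conj l)) /\
    (forall eps, 0 < eps -> exists l : list (ctm a), mu (conj l) < mu (tEq r s) + eps).

End Syntax.

Definition is_sigma_algebra {X : Type} (S : (X -> Prop) -> Prop) : Prop :=
  S (fun _ => True) /\
  (forall A, S A -> S (fun x => ~ A x)) /\
  (forall F : nat -> X -> Prop, (forall n, S (F n)) -> S (fun x => exists n, F n x)).

Definition sigma_gen {X : Type} (G : (X -> Prop) -> Prop) : (X -> Prop) -> Prop :=
  fun A => forall S, is_sigma_algebra S -> (forall U, G U -> S U) -> S A.

Definition is_prob_measure {X : Type} (S : (X -> Prop) -> Prop) (P : (X -> Prop) -> R) : Prop :=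
  (forall A, S A -> 0 <= P A) /\
  P (fun _ => True) = 1 /\
  (forall F : nat -> X -> Prop,
      (forall n, S (F n)) ->
      (forall m n x, m <> n -> F m x -> F n x -> False) ->
      infinite_sum (fun n => P (F n)) (P (fun x => exists n, F n x))).

Definition hat_borel {B C : Type} (cty : C -> ty B) : (sep_interp cty -> Prop) -> Prop :=
  sigma_gen (@hat_open B C cty).

Definition countable (T : Type) : Prop := exists f : T -> nat, forall x y, f x = f y -> x = y.
Arguments hat_borel {B C} cty _.

From Pilot Require Import Defs.
From Stdlib Require Import Reals List Lia Lra.
From Stdlib Require Import Classical ClassicalEpsilon ProofIrrelevance
  FunctionalExtensionality PropExtensionality Eqdep Cantor.
From mathcomp Require all_boot all_order all_algebra.
From mathcomp Require all_classical all_reals all_analysis Rstruct Rstruct_topology.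
Open Scope R_scope.

(** Enumerate the sentences as [e 0], [e 1], ....  A point [x] of [[0, 1)] selects a
    complete theory by successive subdivision: the current window, of length [mu L],
    is split into pieces of lengths [mu (L /\ e k)] and [mu (L /\ ~ e k)], and [x]
    accepts [e k] iff it lies in the first piece.  The set of points accepting [phi]
    then has Lebesgue measure [mu phi].  By the Gaifman condition, the points whose
    theory contains every [r t = s t] but not [r = s] form a null set; every other
    point yields a complete, finitely satisfiable Henkin theory, whose term model is
    a separating interpretation.  The image of Lebesgue measure under this map is the
    required measure; it is unique by Dynkin's pi-lambda theorem, since the sets
    [Mod phi] are closed under intersection and, there being countably many sentences,
    generate the Borel sets. *)

(** * Lebesgue measure on [[0, 1)] *)

Module Lebesgue.
Import all_boot all_order all_algebra.
Import all_classical all_reals all_analysis Rstruct Rstruct_topology.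
Import Order.TTheory GRing.Theory Num.Theory.
Local Open Scope classical_set_scope.
Local Open Scope ring_scope.

Definition borel (A : R -> Prop) : Prop := @measurable _ (measurableTypeR R) A.
Definition ico01 (x : R) : Prop := Rle 0 x /\ Rlt x 1.

Local Notation lebesgue := (@lebesgue_measure R).

Definition lambda01 (A : R -> Prop) : R := fine (lebesgue (fun x => A x /\ ico01 x)).

Lemma set_ext (A B : R -> Prop) : (forall x, A x <-> B x) -> A = B.
Proof. by move=> h; apply: funext => x; apply: propext. Qed.

Lemma ico_itv (a b : R) : (fun x => Rle a x /\ Rlt x b) = ([set` `[a, b[] : set R).
Proof.
apply: set_ext => x; rewrite /= in_itv /=.
by split=> [[/RleP -> /RltP ->]|/andP[/RleP ? /RltP ?]].
Qed.

Lemma borel_ext (A B : R -> Prop) : (forall x, A x <-> B x) -> borel A -> borel B.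
Proof. by move=> /set_ext ->. Qed.

Lemma borel_ico a b : borel (fun x => Rle a x /\ Rlt x b).
Proof. by rewrite /borel ico_itv; exact: measurable_itv. Qed.

Lemma borel_ico01 : borel ico01.
Proof. exact: borel_ico. Qed.

Lemma borel_not A : borel A -> borel (fun x => ~ A x).
Proof. by move=> h; have := measurableC h. Qed.

Lemma borel_or A B : borel A -> borel B -> borel (fun x => A x \/ B x).
Proof. by move=> ha hb; have := measurableU _ _ ha hb. Qed.

Lemma borel_and A B : borel A -> borel B -> borel (fun x => A x /\ B x).
Proof. by move=> ha hb; have := measurableI _ _ ha hb. Qed.

Lemma borel_ex (F : nat -> R -> Prop) :
  (forall n, borel (F n)) -> borel (fun x => exists n, F n x).
Proof.
move=> h; have -> : (fun x => exists n, F n x) = \bigcup_n (F n : set R).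
  by apply: set_ext => x; split=> [[n ?]|[n _ ?]]; exists n.
by apply: bigcup_measurable => n _; exact: h.
Qed.

Lemma borel_all (F : nat -> R -> Prop) :
  (forall n, borel (F n)) -> borel (fun x => forall n, F n x).
Proof.
move=> h; apply: (@borel_ext (fun x => ~ exists n, ~ F n x)); last first.
  by apply: borel_not; apply: borel_ex => n; exact: borel_not.
move=> x; split=> [H n|H [n hn]]; last exact: hn.
by case: (pselect (F n x)) => // hn; case: H; exists n.
Qed.

Lemma lambda01_ext (A B : R -> Prop) : (forall x, ico01 x -> (A x <-> B x)) -> lambda01 A = lambda01 B.
Proof.
move=> h; rewrite /lambda01 (_ : (fun x => A x /\ ico01 x) = (fun x => B x /\ ico01 x)) //.
by apply: set_ext => x; split=> -[/h hx ?]; split=> //; exact/hx.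
Qed.

Lemma borel_in01 A : borel A -> borel (fun x => A x /\ ico01 x).
Proof. by move=> h; apply: borel_and => //; exact: borel_ico01. Qed.

Lemma lebesgue_in01_fin (A : R -> Prop) : borel A ->
  (lebesgue (fun x => A x /\ ico01 x) \is a fin_num)%E.
Proof.
move=> h; rewrite ge0_fin_numE //; apply: (le_lt_trans (y := lebesgue ico01)).
  by apply: le_measure; rewrite ?inE //; [exact: borel_in01|exact: borel_ico01|move=> x []].
by rewrite /ico01 ico_itv lebesgue_measure_itv /= lte_fin ltr01 -EFinB ltry.
Qed.

Lemma lambda01_ge0 A : Rle 0 (lambda01 A).
Proof. by apply/RleP; exact: fine_ge0. Qed.

Lemma lambda01_le A B : borel A -> borel B -> (forall x, A x -> B x) -> Rle (lambda01 A) (lambda01 B).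
Proof.
move=> ha hb hab; apply/RleP; apply: fine_le; try exact: lebesgue_in01_fin.
by apply: le_measure; rewrite ?inE; [exact: borel_in01|exact: borel_in01|move=> x [/hab]].
Qed.

Lemma lambda01_ico a b : Rle 0 a -> Rle a b -> Rle b 1 ->
  lambda01 (fun x => Rle a x /\ Rlt x b) = Rminus b a.
Proof.
move=> /RleP h0 /RleP hab /RleP hb1; rewrite /lambda01.
have -> : (fun x => (Rle a x /\ Rlt x b) /\ ico01 x) = ([set` `[a, b[] : set R).
  rewrite -ico_itv; apply: set_ext => x; split=> [[]//|[h1 h2]].
  split=> //; split; first by apply/RleP; apply: (le_trans h0); exact/RleP.
  by apply/RltP; apply: (lt_le_trans (y := b)) => //; exact/RltP.
rewrite lebesgue_measure_itv /=; case: ifPn => //; rewrite lte_fin -leNgt => hba /=.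
have -> : b = a by apply/eqP; rewrite eq_le hab hba.
by rewrite /Rminus Rplus_opp_r.
Qed.

Lemma lambda01_total : lambda01 (fun _ => True) = 1%coqR.
Proof.
rewrite /lambda01 (_ : (fun x => True /\ ico01 x) = ([set` `[0%R, 1%R[] : set R)).
  by rewrite lebesgue_measure_itv /= lte_fin ltr01 /= subr0.
by rewrite -ico_itv; apply: set_ext => x; split=> [[]|].
Qed.

Lemma lambda01_add A B : borel A -> borel B -> (forall x, A x -> B x -> False) ->
  lambda01 (fun x => A x \/ B x) = Rplus (lambda01 A) (lambda01 B).
Proof.
move=> ha hb hd; rewrite /lambda01.
have -> : (fun x => (A x \/ B x) /\ ico01 x) =
  ((fun x => A x /\ ico01 x) `|` (fun x => B x /\ ico01 x) : set R).
  by apply: set_ext => x; rewrite /setU /=; tauto.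
rewrite measureU; [|exact: borel_in01|exact: borel_in01|].
  by rewrite fineD //; exact: lebesgue_in01_fin.
by apply/seteqP; split=> // x [[h1 _] [h2 _]]; exact: (hd x h1 h2).
Qed.

Lemma infinite_sum_fine (u : nat -> R) (l : \bar R) :
  l \is a fin_num -> (fun n => (\sum_(0 <= i < n) u i)%:E) @ \oo --> l ->
  infinite_sum u (fine l).
Proof.
move=> fin; rewrite -(fineK fin) => /fine_cvgP [_ hc] eps /RltP heps.
move: hc => /(@cvgrPdist_lt _ R^o) /(_ eps heps) [N _ hN].
exists N => n hn; rewrite /R_dist; change (Rabs ?a) with (`|a|); rewrite distrC.
have -> : sum_f_R0 u n = \sum_(0 <= i < n.+1) u i.
  by elim: n {hn} => [|n IH]; rewrite ?big_nat1 // big_nat_recr //= -IH.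
by apply/RltP/hN; rewrite /=; apply/ssrnat.leP; lia.
Qed.

Lemma lambda01_sigma (F : nat -> R -> Prop) : (forall n, borel (F n)) ->
  (forall m n x, m <> n -> F m x -> F n x -> False) ->
  infinite_sum (fun n => lambda01 (F n)) (lambda01 (fun x => exists n, F n x)).
Proof.
move=> hm hd; pose G n : set R := fun x => F n x /\ ico01 x.
have Gd : trivIset setT G.
  move=> i j _ _ [x [[h1 _] [h2 _]]]; apply/eqP/negPn/negP => /eqP hij.
  exact: (hd _ _ _ hij h1 h2).
have UE : (fun x => (exists n, F n x) /\ ico01 x) = \bigcup_n G n.
  by apply: set_ext => x; split=> [[[n ?] ?]|[n _ [? ?]]]; [exists n|split=> //; exists n].
rewrite /lambda01; apply: infinite_sum_fine; first by apply: lebesgue_in01_fin; exact: borel_ex.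
have -> : (fun n => (\sum_(0 <= i < n) fine (lebesgue (G i)))%:E) =
    (fun n => \sum_(0 <= i < n) lebesgue (G i))%E.
  by apply: funext => n; rewrite EFin_sum_fine // => i _; exact: lebesgue_in01_fin.
rewrite UE; apply: measure_semi_sigma_additive => //; first by move=> n; exact: borel_in01.
by apply: bigcup_measurable => n _; exact: borel_in01.
Qed.

Lemma lambda01_null_union (F : nat -> R -> Prop) : (forall n, borel (F n)) ->
  (forall n, lambda01 (F n) = 0%coqR) -> lambda01 (fun x => exists n, F n x) = 0%coqR.
Proof.
move=> hm h0; pose G n : set R := fun x => F n x /\ ico01 x.
have G0 n : lebesgue (G n) = 0%E.
  by rewrite -(fineK (lebesgue_in01_fin _ (hm n))); have := h0 n; rewrite /lambda01 => ->.
have UE : (fun x => (exists n, F n x) /\ ico01 x) = \bigcup_n G n.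
  by apply: set_ext => x; split=> [[[n ?] ?]|[n _ [? ?]]]; [exists n|split=> //; exists n].
have : (lebesgue (\bigcup_n G n) <= \sum_(0 <= i <oo) lebesgue (G i))%E.
  apply: measure_sigma_subadditive => //; first by move=> n; exact: borel_in01.
  by apply: bigcup_measurable => n _; exact: borel_in01.
rewrite (eq_eseriesr (fun n _ => G0 n)) eseries0 // => hle.
rewrite /lambda01 UE (_ : lebesgue _ = 0%E) //.
by apply/eqP; rewrite eq_le hle /=; exact: measure_ge0.
Qed.

End Lebesgue.
Import Lebesgue.

Unset Asymmetric Patterns.
Set Bullet Behavior "Strict Subproofs".

Lemma lambda01_off_null (N A : R -> Prop) : borel N -> lambda01 N = 0 ->
  borel A -> lambda01 A = lambda01 (fun x => A x /\ ~ N x).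
Proof.
  intros hN h0 hA.
  assert (hAN : borel (fun x => A x /\ N x)) by (apply borel_and; auto).
  assert (Hle : lambda01 (fun x => A x /\ N x) <= lambda01 N)
    by (apply lambda01_le; tauto).
  pose proof (lambda01_ge0 (fun x => A x /\ N x)).
  rewrite (lambda01_ext A (fun x => (A x /\ ~ N x) \/ (A x /\ N x)))
    by (intros x _; destruct (classic (N x)); tauto).
  rewrite lambda01_add; [lra| |auto|tauto].
  apply borel_and, borel_not; auto.
Qed.

Lemma lambda01_eq_off_null (N A B : R -> Prop) : borel N -> lambda01 N = 0 ->
  borel A -> borel B ->
  (forall x, ico01 x -> ~ N x -> (A x <-> B x)) -> lambda01 A = lambda01 B.
Proof.
  intros hN h0 hA hB H. rewrite (lambda01_off_null N A), (lambda01_off_null N B); auto.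
  apply lambda01_ext; intros x hx. specialize (H x hx). tauto.
Qed.

Section Sets.
Variable X : Type.

Lemma pred_ext (A B : X -> Prop) : (forall x, A x <-> B x) -> A = B.
Proof.
  intros H. apply functional_extensionality; intros x.
  apply propositional_extensionality; auto.
Qed.

Lemma infinite_sum_const_eq0 c : infinite_sum (fun _ => c) c -> c = 0.
Proof.
  intros H. apply NNPP; intros Hc.
  assert (Hp : 0 < Rabs c) by (apply Rabs_pos_lt; auto).
  destruct (H (Rabs c) Hp) as [N HN].
  specialize (HN (S N) ltac:(lia)); unfold R_dist in HN.
  assert (E : forall n, sum_f_R0 (fun _ => c) n = INR (S n) * c).
  { induction n; simpl sum_f_R0; [simpl; ring|rewrite IHn, (S_INR (S n)); ring]. }
  rewrite E in HN.
  replace (INR (S (S N)) * c - c) with (INR (S N) * c) in HN by (rewrite (S_INR (S N)); ring).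
  rewrite Rabs_mult, (Rabs_pos_eq (INR (S N))) in HN by apply pos_INR.
  assert (1 <= INR (S N)) by (rewrite S_INR; pose proof (pos_INR N); lra).
  nra.
Qed.

Lemma infinite_sum_first_two (f : nat -> R) : (forall n, (2 <= n)%nat -> f n = 0) ->
  infinite_sum f (f 0%nat + f 1%nat).
Proof.
  intros H eps He. exists 1%nat; intros [|n] Hn; [lia|].
  assert (E : forall m, sum_f_R0 f (S m) = f 0%nat + f 1%nat).
  { induction m; [simpl; ring|]. simpl sum_f_R0 in *. rewrite IHm, (H (S (S m))) by lia. ring. }
  rewrite E. unfold R_dist. rewrite Rminus_diag, Rabs_R0. auto.
Qed.

Definition seq2 (A B : X -> Prop) (n : nat) : X -> Prop :=
  match n with O => A | S O => B | _ => fun _ => False end.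

Lemma seq2_union A B : (fun x => exists n, seq2 A B n x) = (fun x => A x \/ B x).
Proof.
  apply pred_ext; intros x; split.
  - intros [[|[|n]] h]; simpl in h; tauto.
  - intros [h|h]; [exists O|exists (S O)]; auto.
Qed.

Lemma seq2_disjoint A B : (forall x, A x -> B x -> False) ->
  forall m n x, m <> n -> seq2 A B m x -> seq2 A B n x -> False.
Proof. intros hd [|[|m]] [|[|n]] x hmn; simpl; try tauto; eauto. Qed.

Lemma sigma_empty S : is_sigma_algebra S -> S (fun _ : X => False).
Proof.
  intros [HT [HC _]]. replace (fun _ : X => False) with (fun _ : X => ~ True); auto.
  apply pred_ext; tauto.
Qed.

Lemma sigma_seq2 S A B : is_sigma_algebra S -> S A -> S B -> forall n, S (seq2 A B n).
Proof. intros HS hA hB [|[|n]]; simpl; auto. apply sigma_empty; auto. Qed.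

Lemma sigma_gen_sigma (G : (X -> Prop) -> Prop) : is_sigma_algebra (sigma_gen G).
Proof.
  split; [|split].
  - intros S [h _] _; auto.
  - intros A hA S hS hG. apply hS, hA; auto.
  - intros F hF S hS hG. apply hS; intros n; apply hF; auto.
Qed.

Lemma sigma_gen_base (G : (X -> Prop) -> Prop) A : G A -> sigma_gen G A.
Proof. intros h S _ hG; auto. Qed.

Lemma countable_enumeration : countable X -> X -> exists e : nat -> X, forall x, exists n, e n = x.
Proof.
  intros [f Hf] x0.
  exists (fun n => match excluded_middle_informative (exists x, f x = n) with
                   | left h => proj1_sig (constructive_indefinite_description _ h)
                   | right _ => x0 end).
  intros x. exists (f x). destruct (excluded_middle_informative _) as [h|h].
  - destruct (constructive_indefinite_description _ h) as [y Hy]; simpl; auto.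
  - exfalso; eauto.
Qed.

Section ProbabilityMeasure.
Variables (S : (X -> Prop) -> Prop) (P : (X -> Prop) -> R).
Hypotheses (HS : is_sigma_algebra S) (HP : is_prob_measure S P).

Lemma measure_empty : P (fun _ => False) = 0.
Proof.
  destruct HP as [_ [_ Hsum]].
  assert (H := Hsum (fun _ _ => False) (fun _ => sigma_empty _ HS) (fun _ _ _ _ h _ => h)).
  cbv beta in H.
  replace (fun _ : X => exists _ : nat, False) with (fun _ : X => False) in H
    by (apply pred_ext; firstorder).
  apply infinite_sum_const_eq0; exact H.
Qed.

Lemma measure_add A B : S A -> S B -> (forall x, A x -> B x -> False) ->
  P (fun x => A x \/ B x) = P A + P B.
Proof.
  intros hA hB hd. apply (uniqueness_sum (fun n => P (seq2 A B n))).
  - rewrite <- seq2_union. apply HP; [apply sigma_seq2|apply seq2_disjoint]; auto.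
  - apply infinite_sum_first_two. intros [|[|n]] Hn; [lia|lia|apply measure_empty].
Qed.

Lemma measure_compl A : S A -> P (fun x => ~ A x) = 1 - P A.
Proof.
  intros hA. destruct HS as [_ [HC _]]. destruct HP as [_ [HT _]].
  assert (H := measure_add A (fun x => ~ A x) hA (HC _ hA) ltac:(auto)).
  cbv beta in H.
  replace (fun x => A x \/ ~ A x) with (fun _ : X => True) in H
    by (apply pred_ext; intros x; split; auto using classic).
  lra.
Qed.
End ProbabilityMeasure.

(** * Dynkin's pi-lambda theorem *)

Definition dynkin_system (L : (X -> Prop) -> Prop) : Prop :=
  L (fun _ => True) /\ (forall A, L A -> L (fun x => ~ A x)) /\
  (forall F : nat -> X -> Prop, (forall n, L (F n)) ->
     (forall m n x, m <> n -> F m x -> F n x -> False) -> L (fun x => exists n, F n x)).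

Lemma union_disjointify (F : nat -> X -> Prop) :
  (fun x => exists n, F n x) =
  (fun x => exists n, F n x /\ ~ exists k, (k < n)%nat /\ F k x).
Proof.
  apply pred_ext; intros x; split; [|firstorder].
  intros [n Hn]. induction n as [n IH] using (well_founded_induction Wf_nat.lt_wf).
  destruct (classic (exists k, (k < n)%nat /\ F k x)) as [[k [hk Fk]]|h]; eauto.
Qed.

Section Dynkin.
Variable Pi : (X -> Prop) -> Prop.
Hypothesis Pi_and : forall A B, Pi A -> Pi B -> Pi (fun x => A x /\ B x).

Definition dynkin_gen (A : X -> Prop) : Prop :=
  forall L, dynkin_system L -> (forall B, Pi B -> L B) -> L A.

Lemma dynkin_gen_system : dynkin_system dynkin_gen.
Proof.
  split; [|split].
  - intros L [H _] _; auto.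
  - intros A HA L HL HP. apply HL, HA; auto.
  - intros F HF Hd L HL HP. apply HL; auto. intros n; apply HF; auto.
Qed.

Lemma dynkin_gen_base A : Pi A -> dynkin_gen A.
Proof. intros HA L _ HP; auto. Qed.

Lemma dynkin_gen_or A B : dynkin_gen A -> dynkin_gen B ->
  (forall x, A x -> B x -> False) -> dynkin_gen (fun x => A x \/ B x).
Proof.
  intros hA hB hd. destruct dynkin_gen_system as [HT [HC HU]].
  rewrite <- seq2_union. apply HU; [|apply seq2_disjoint; auto].
  intros [|[|n]]; simpl; auto.
  replace (fun _ : X => False) with (fun _ : X => ~ True) by (apply pred_ext; tauto). auto.
Qed.

Lemma dynkin_gen_trace A : dynkin_gen A -> dynkin_system (fun B => dynkin_gen (fun x => A x /\ B x)).
Proof.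
  intros hA. destruct dynkin_gen_system as [HT [HC HU]]. split; [|split].
  - replace (fun x => A x /\ True) with A; auto. apply pred_ext; tauto.
  - intros B hB.
    replace (fun x => A x /\ ~ B x) with (fun x => ~ (~ A x \/ (A x /\ B x)))
      by (apply pred_ext; intros x; tauto).
    apply HC, dynkin_gen_or; auto. intros x h1 [h2 _]; auto.
  - intros F hF hd.
    replace (fun x => A x /\ exists n, F n x) with (fun x => exists n, A x /\ F n x)
      by (apply pred_ext; firstorder).
    apply HU; auto. intros m n x hmn [_ h1] [_ h2]; eauto.
Qed.

Lemma dynkin_gen_and A B : dynkin_gen A -> dynkin_gen B -> dynkin_gen (fun x => A x /\ B x).
Proof.
  assert (HPi : forall A B, Pi A -> dynkin_gen B -> dynkin_gen (fun x => A x /\ B x)).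
  { intros A0 B0 hA hB. apply hB; [apply dynkin_gen_trace, dynkin_gen_base; auto|].
    intros; apply dynkin_gen_base, Pi_and; auto. }
  intros hA hB. apply (hA (fun A => dynkin_gen (fun x => A x /\ B x))).
  - replace (fun A => dynkin_gen (fun x => A x /\ B x))
      with (fun A => dynkin_gen (fun x => B x /\ A x)).
    + apply dynkin_gen_trace; auto.
    + apply functional_extensionality; intros A0. f_equal. apply pred_ext; tauto.
  - intros; apply HPi; auto.
Qed.

Lemma dynkin_gen_sigma : is_sigma_algebra dynkin_gen.
Proof.
  destruct dynkin_gen_system as [HT [HC HU]]. split; [auto|split; [auto|]].
  intros F hF. rewrite union_disjointify. apply HU.
  - intros n. apply dynkin_gen_and; auto. apply HC.
    induction n as [|n IH].
    + replace (fun x => exists k, (k < 0)%nat /\ F k x) with (fun _ : X => ~ True); auto.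
      apply pred_ext; intros x; split; [tauto|]. intros [k [hk _]]; lia.
    + replace (fun x => exists k, (k < S n)%nat /\ F k x)
        with (fun x => ~ (~ (exists k, (k < n)%nat /\ F k x) /\ ~ F n x)).
      * apply HC, dynkin_gen_and; auto.
      * apply pred_ext; intros x; split.
        -- intros h. apply NNPP; intros h'. apply h; split.
           ++ intros [k [hk Fk]]. apply h'. exists k; split; auto; lia.
           ++ intros Fn. apply h'; eauto.
        -- intros [k [hk Fk]] [h1 h2]. destruct (Nat.eq_dec k n) as [->|hne]; auto.
           apply h1. exists k; split; auto; lia.
  - intros m n x hmn [h1 h2] [h3 h4].
    destruct (Nat.lt_total m n) as [hl|[he|hl]]; eauto.
Qed.

Theorem pi_lambda L : dynkin_system L -> (forall A, Pi A -> L A) ->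
  forall A, sigma_gen Pi A -> L A.
Proof. intros HL HP A HA. apply (HA dynkin_gen dynkin_gen_sigma dynkin_gen_base); auto. Qed.
End Dynkin.

Lemma prob_measure_unique (Pi S : (X -> Prop) -> Prop) (P Q : (X -> Prop) -> R) :
  (forall A B, Pi A -> Pi B -> Pi (fun x => A x /\ B x)) ->
  is_sigma_algebra S -> (forall A, Pi A -> S A) ->
  is_prob_measure S P -> is_prob_measure S Q -> (forall A, Pi A -> P A = Q A) ->
  forall A, S A -> sigma_gen Pi A -> P A = Q A.
Proof.
  intros Pi_and HS HPiS HP HQ HPQ A HA HgA.
  apply (pi_lambda Pi Pi_and (fun A => S A /\ P A = Q A)); [split; [|split]| |exact HgA].
  - destruct HS as [HT _]. split; [auto|]. rewrite (proj1 (proj2 HP)), (proj1 (proj2 HQ)). auto.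
  - intros A0 [h1 h2]. split; [apply HS; auto|].
    rewrite (measure_compl _ _ HS HP), (measure_compl _ _ HS HQ), h2; auto.
  - intros F hF hd. split; [apply HS; intros n; apply hF|].
    apply (uniqueness_sum (fun n => P (F n))); [apply HP; auto; intros n; apply hF|].
    replace (fun n => P (F n)) with (fun n => Q (F n))
      by (apply functional_extensionality; intros n; symmetry; apply hF).
    apply HQ; auto. intros n; apply hF.
  - intros A0 hA0; split; auto.
Qed.
End Sets.

(** * Substitution and semantics *)

Section Syntax.
Variables (B C : Type) (cty : C -> ty B).

Notation tm := (tm cty).
Notation ctm := (ctm cty).
Notation sentence := (sentence cty).
Notation interp := (interp cty).
Notation ap I f x := (Defs.app I _ _ f x).

Definition ren_t (G G' : list (ty B)) := forall a, var G a -> var G' a.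
Definition sub_t (G G' : list (ty B)) := forall a, var G a -> tm G' a.

Definition lift_ren {G G'} (b : ty B) (r : ren_t G G') : ren_t (b :: G) (b :: G') :=
  fun a v =>
  match v in var L a0 return
    (match L with nil => unit | c :: L' => ren_t L' G' -> var (c :: G') a0 end) with
  | Vz _ _ => fun _ => Vz _ _
  | Vs _ v' => fun r => Vs _ (r _ v')
  end r.

Fixpoint ren {G G'} (r : ren_t G G') {a} (t : tm G a) {struct t} : tm G' a :=
  match t in Defs.tm _ _ a0 return tm G' a0 with
  | Var _ v => Var cty (r _ v)
  | Con _ _ c => Con cty G' c
  | EqC _ _ a => EqC cty G' a
  | NegC _ _ => NegC cty G'
  | OrC _ _ => OrC cty G'
  | AndC _ _ => AndC cty G'
  | PiC _ _ a => PiC cty G' a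
  | App s u => App (ren r s) (ren r u)
  | Lam t => Lam (ren (lift_ren _ r) t)
  end.

Definition lift_sub {G G'} (b : ty B) (s : sub_t G G') : sub_t (b :: G) (b :: G') :=
  fun a v =>
  match v in var L a0 return
    (match L with nil => unit | c :: L' => sub_t L' G' -> tm (c :: G') a0 end) with
  | Vz _ _ => fun _ => Var cty (Vz _ _)
  | Vs _ v' => fun s => ren (fun _ w => Vs _ w) (s _ v')
  end s.

Fixpoint subst {G G'} (s : sub_t G G') {a} (t : tm G a) {struct t} : tm G' a :=
  match t in Defs.tm _ _ a0 return tm G' a0 with
  | Var _ v => s _ v
  | Con _ _ c => Con cty G' c
  | EqC _ _ a => EqC cty G' a
  | NegC _ _ => NegC cty G'
  | OrC _ _ => OrC cty G'
  | AndC _ _ => AndC cty G'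
  | PiC _ _ a => PiC cty G' a
  | App s' u => App (subst s s') (subst s u)
  | Lam t => Lam (subst (lift_sub _ s) t)
  end.

Section Semantics.
Variable I : interp.

Fixpoint env_of (G : list (ty B)) : (forall a, var G a -> D I a) -> env (D I) G :=
  match G return (forall a, var G a -> D I a) -> env (D I) G with
  | nil => fun _ => tt
  | b :: G' => fun h => (h b (Vz G' b), env_of G' (fun a v => h a (Vs b v)))
  end.

Lemma lookup_env_of G a (v : var G a) h : lookup (D I) v (env_of G h) = h a v.
Proof. induction v; simpl; auto. Qed.

Lemma env_of_ext G (h h' : forall a, var G a -> D I a) :
  (forall a v, h a v = h' a v) -> env_of G h = env_of G h'.
Proof.
  revert h h'; induction G; intros h h' H; simpl; auto.
  f_equal; [apply H | apply IHG; intros; apply H].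
Qed.

Lemma env_of_lookup G (e : env (D I) G) : env_of G (fun a v => lookup (D I) v e) = e.
Proof. induction G; simpl; destruct e; auto. f_equal. apply IHG. Qed.

Lemma tv_eq_iff (x y : D I TBool) (P : Prop) :
  (tv I x = true <-> P) -> (tv I y = true <-> P) -> x = y.
Proof.
  intros Hx Hy. apply tv_inj.
  destruct (tv I x), (tv I y); intuition congruence.
Qed.

Lemma den_EqC G G' a e e' : den I (EqC cty G a) e = den I (EqC cty G' a) e'.
Proof.
  apply app_ext; intro x. apply app_ext; intro y.
  apply (tv_eq_iff _ _ (x = y)); apply den_eq.
Qed.

Lemma den_NegC G G' e e' : den I (NegC cty G) e = den I (NegC cty G') e'.
Proof. apply app_ext; intro x. apply tv_inj. rewrite !den_neg. reflexivity. Qed.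

Lemma den_OrC G G' e e' : den I (OrC cty G) e = den I (OrC cty G') e'.
Proof.
  apply app_ext; intro x. apply app_ext; intro y. apply tv_inj. rewrite !den_or. reflexivity.
Qed.

Lemma den_AndC G G' e e' : den I (AndC cty G) e = den I (AndC cty G') e'.
Proof.
  apply app_ext; intro x. apply app_ext; intro y. apply tv_inj. rewrite !den_and. reflexivity.
Qed.

Lemma den_PiC G G' a e e' : den I (PiC cty G a) e = den I (PiC cty G' a) e'.
Proof.
  apply app_ext; intro f.
  apply (tv_eq_iff _ _ (forall x, tv I (ap I f x) = true)); apply den_pi.
Qed.

Lemma den_ren G a (t : tm G a) : forall G' (r : ren_t G G') (e : env (D I) G'),
  den I (ren r t) e = den I t (env_of G (fun b v => lookup (D I) (r b v) e)).
Proof.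
  induction t; intros G' r e; simpl;
    auto using den_EqC, den_NegC, den_OrC, den_AndC, den_PiC.
  - rewrite !den_var, lookup_env_of. reflexivity.
  - rewrite !den_con. reflexivity.
  - rewrite !den_app, IHt1, IHt2. reflexivity.
  - apply app_ext; intro x. rewrite !den_lam, IHt. reflexivity.
Qed.

Lemma den_subst G a (t : tm G a) : forall G' (s : sub_t G G') (e : env (D I) G'),
  den I (subst s t) e = den I t (env_of G (fun b v => den I (s b v) e)).
Proof.
  induction t; intros G' s e; simpl;
    auto using den_EqC, den_NegC, den_OrC, den_AndC, den_PiC.
  - rewrite den_var, lookup_env_of. reflexivity.
  - rewrite !den_con. reflexivity.
  - rewrite !den_app, IHt1, IHt2. reflexivity.
  - apply app_ext; intro x. rewrite !den_lam, IHt. simpl.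
    rewrite den_var. simpl. do 2 f_equal. apply env_of_ext; intros c v.
    rewrite den_ren. simpl. rewrite env_of_lookup. reflexivity.
Qed.

Lemma true_neg (phi : sentence) : true_in I (tNeg phi) <-> ~ true_in I phi.
Proof.
  unfold true_in, V, tNeg. rewrite den_app, den_neg.
  destruct (tv I (den I phi tt)); simpl; intuition congruence.
Qed.

Lemma true_and (phi psi : sentence) :
  true_in I (tAnd phi psi) <-> true_in I phi /\ true_in I psi.
Proof.
  unfold true_in, V, tAnd. rewrite !den_app, den_and.
  destruct (tv I (den I phi tt)), (tv I (den I psi tt)); simpl; intuition congruence.
Qed.

Lemma true_or (phi psi : sentence) :
  true_in I (tOr phi psi) <-> true_in I phi \/ true_in I psi.
Proof.
  unfold true_in, V, tOr. rewrite !den_app, den_or.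
  destruct (tv I (den I phi tt)), (tv I (den I psi tt)); simpl; intuition congruence.
Qed.

Lemma true_eq a (s t : ctm a) : true_in I (tEq s t) <-> V I s = V I t.
Proof. unfold true_in, V, tEq. rewrite !den_app. apply den_eq. Qed.

Lemma true_top : true_in I (tTop cty).
Proof. apply true_eq; reflexivity. Qed.

Lemma true_bigAnd l : true_in I (bigAnd l) <-> forall phi, In phi l -> true_in I phi.
Proof.
  induction l; simpl.
  - split; [intros _ phi []|intros _; apply true_top].
  - rewrite true_and, IHl. split; [intros [H1 H2] phi [<-|H]|intros H; split]; auto.
Qed.

Lemma V_bool_eq (phi psi : sentence) : (true_in I phi <-> true_in I psi) -> V I phi = V I psi.
Proof. intros H. apply (tv_eq_iff _ _ (true_in I psi)); [exact H|reflexivity]. Qed.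

Lemma V_app a b (r : ctm (TArr a b)) t : V I (App r t) = ap I (V I r) (V I t).
Proof. apply den_app. Qed.

End Semantics.

Definition const_true (a : ty B) : ctm (TArr a TBool) :=
  Lam (tEq (NegC cty (a :: nil)) (NegC cty (a :: nil))).

Lemma const_true_app I a (y : D I a) : tv I (ap I (V I (const_true a)) y) = true.
Proof. unfold V, const_true. rewrite den_lam. unfold tEq. rewrite !den_app. apply den_eq; auto. Qed.

Lemma true_const_true I a (t : ctm a) : true_in I (App (const_true a) t).
Proof. unfold true_in. rewrite V_app. apply const_true_app. Qed.

(** * The term model of a complete Henkin theory *)

Definition satisfies (I : interp) (l : list sentence) := forall phi, In phi l -> true_in I phi.

Section TermModel.
Variable T : sentence -> Prop.
Hypothesis T_fsat : forall l, (forall phi, In phi l -> T phi) -> exists I, satisfies I l.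
Hypothesis T_complete : forall phi, T phi \/ T (tNeg phi).
Hypothesis T_henkin : forall a b (r s : ctm (TArr a b)),
  (forall t, T (tEq (App r t) (App s t))) -> T (tEq r s).
Hypothesis T_inhabited : forall b, inhabited (ctm (TBase b)).

Lemma T_entails l psi : (forall phi, In phi l -> T phi) ->
  (forall I, satisfies I l -> true_in I psi) -> T psi.
Proof.
  intros Hl Hs. destruct (T_complete psi) as [H|H]; auto.
  destruct (T_fsat (tNeg psi :: l)) as [I HI].
  - intros phi [<-|Hin]; auto.
  - exfalso. apply (proj1 (true_neg I psi) (HI _ (or_introl eq_refl))).
    apply Hs. intros phi Hin; apply HI; right; auto.
Qed.

Lemma T_valid psi : (forall I, true_in I psi) -> T psi.
Proof. intros H; apply (T_entails nil); [intros _ []|intros I _; apply H]. Qed.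

Lemma T_entails1 phi psi : T phi -> (forall I, true_in I phi -> true_in I psi) -> T psi.
Proof.
  intros H1 H; apply (T_entails (phi :: nil)); [intros x [<-|[]]; auto|].
  intros I HI; apply H, HI; left; auto.
Qed.

Lemma T_entails2 phi1 phi2 psi : T phi1 -> T phi2 ->
  (forall I, true_in I phi1 -> true_in I phi2 -> true_in I psi) -> T psi.
Proof.
  intros H1 H2 H; apply (T_entails (phi1 :: phi2 :: nil)); [intros x [<-|[<-|[]]]; auto|].
  intros I HI; apply H; apply HI; simpl; auto.
Qed.

Lemma T_neg phi : T (tNeg phi) <-> ~ T phi.
Proof.
  split; [|intros H; destruct (T_complete phi); tauto].
  intros H1 H2. destruct (T_fsat (phi :: tNeg phi :: nil)) as [I HI].
  - intros x [<-|[<-|[]]]; auto.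
  - apply (proj1 (true_neg I phi) (HI _ (or_intror (or_introl eq_refl)))).
    apply HI; left; auto.
Qed.

Lemma T_and phi psi : T (tAnd phi psi) <-> T phi /\ T psi.
Proof.
  split.
  - intros H; split; apply (T_entails1 _ _ H); intros I HI; apply true_and in HI; tauto.
  - intros [H1 H2]; apply (T_entails2 _ _ _ H1 H2); intros I ? ?; apply true_and; auto.
Qed.

Lemma T_or phi psi : T (tOr phi psi) <-> T phi \/ T psi.
Proof.
  split; [|intros [H|H]; apply (T_entails1 _ _ H); intros I HI; apply true_or; auto].
  intros H. destruct (classic (T psi)) as [Hq|Hq]; auto. left.
  apply T_neg in Hq. apply (T_entails2 _ _ _ H Hq); intros I H1 H2.
  apply true_or in H1; rewrite true_neg in H2; tauto.
Qed.

Lemma T_refl a (t : ctm a) : T (tEq t t).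
Proof. apply T_valid; intros I; apply true_eq; auto. Qed.

Lemma T_sym a (s t : ctm a) : T (tEq s t) -> T (tEq t s).
Proof.
  intros H; apply (T_entails1 _ _ H); intros I HI; apply true_eq; apply true_eq in HI; auto.
Qed.

Lemma T_trans a (s t u : ctm a) : T (tEq s t) -> T (tEq t u) -> T (tEq s u).
Proof.
  intros H1 H2; apply (T_entails2 _ _ _ H1 H2); intros I ? ?; apply true_eq.
  apply true_eq in H; apply true_eq in H0; congruence.
Qed.

Lemma T_app_cong a b (r r' : ctm (TArr a b)) (u u' : ctm a) :
  T (tEq r r') -> T (tEq u u') -> T (tEq (App r u) (App r' u')).
Proof.
  intros H1 H2; apply (T_entails2 _ _ _ H1 H2); intros I ? ?; apply true_eq.
  apply true_eq in H; apply true_eq in H0. rewrite !V_app; congruence.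
Qed.

Lemma T_eq_bool (phi psi : sentence) : T (tEq phi psi) -> (T phi <-> T psi).
Proof.
  intros H; split; intros H'; apply (T_entails2 _ _ _ H H'); intros I H1 H2;
    apply true_eq in H1; unfold true_in in *; congruence.
Qed.

Lemma T_eq_const_true a (r : ctm (TArr a TBool)) :
  (forall t, T (App r t)) -> T (tEq r (const_true a)).
Proof.
  intros Ht. apply T_henkin; intros t. apply (T_entails1 _ _ (Ht t)); intros I HI.
  apply true_eq, V_bool_eq. split; auto. intros _; apply true_const_true.
Qed.

(** Closed terms of type [a] modulo [T]-equality, each class represented by the
    predicate [fun u => T (t = u)]. *)
Definition eqclass (a : ty B) : Type :=
  {P : ctm a -> Prop | exists t, P = fun u => T (tEq t u)}.

Definition cls {a} (t : ctm a) : eqclass a :=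
  exist _ (fun u => T (tEq t u)) (ex_intro _ t eq_refl).

Definition rep {a} (x : eqclass a) : ctm a :=
  proj1_sig (constructive_indefinite_description _ (proj2_sig x)).

Lemma eqclass_eq a (x y : eqclass a) : proj1_sig x = proj1_sig y -> x = y.
Proof. destruct x, y; simpl; intros ->; f_equal; apply proof_irrelevance. Qed.

Lemma cls_rep a (x : eqclass a) : cls (rep x) = x.
Proof.
  apply eqclass_eq. unfold rep; simpl.
  destruct (constructive_indefinite_description _ _) as [t Ht]; simpl; auto.
Qed.
Arguments cls_rep {a}.

Lemma cls_eq a (s t : ctm a) : cls s = cls t <-> T (tEq s t).
Proof.
  split.
  - intros H. apply (f_equal (fun x => proj1_sig x t)) in H. simpl in H.
    rewrite H. apply T_refl.
  - intros H. apply eqclass_eq; simpl. apply functional_extensionality; intros u.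
    apply propositional_extensionality. split; intros H'; eauto using T_trans, T_sym.
Qed.

Lemma rep_cls a (t : ctm a) : T (tEq (rep (cls t)) t).
Proof. apply cls_eq, cls_rep. Qed.

Definition tv_cls (x : eqclass TBool) : bool :=
  if excluded_middle_informative (T (rep x)) then true else false.

Lemma tv_cls_cls phi : tv_cls (cls phi) = true <-> T phi.
Proof.
  unfold tv_cls. rewrite <- (T_eq_bool _ _ (rep_cls _ phi)).
  destruct (excluded_middle_informative _); split; congruence || tauto.
Qed.

Lemma tv_cls_cls_false phi : tv_cls (cls phi) = false <-> ~ T phi.
Proof.
  rewrite <- tv_cls_cls. destruct (tv_cls (cls phi)); split; congruence || tauto.
Qed.

Definition app_cls a b (f : eqclass (TArr a b)) (x : eqclass a) : eqclass b :=
  cls (App (rep f) (rep x)).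
Arguments app_cls {a b}.

Lemma app_cls_cls a b (s : ctm (TArr a b)) u : app_cls (cls s) (cls u) = cls (App s u).
Proof. apply cls_eq, T_app_cong; apply rep_cls. Qed.

Definition den_cls G a (t : tm G a) (e : env eqclass G) : eqclass a :=
  cls (subst (fun b v => rep (lookup eqclass v e)) t).
Arguments den_cls {G a}.

Lemma tv_cls_inj x y : tv_cls x = tv_cls y -> x = y.
Proof.
  rewrite <- (cls_rep x), <- (cls_rep y). intros H. apply cls_eq.
  destruct (tv_cls (cls (rep x))) eqn:E1; symmetry in H.
  - apply tv_cls_cls in E1. apply tv_cls_cls in H.
    apply (T_entails2 _ _ _ E1 H); intros I H1 H2; apply true_eq, V_bool_eq; tauto.
  - apply tv_cls_cls_false, T_neg in E1. apply tv_cls_cls_false, T_neg in H.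
    apply (T_entails2 _ _ _ E1 H); intros I H1 H2; apply true_eq, V_bool_eq.
    rewrite true_neg in H1, H2; tauto.
Qed.

Lemma tv_cls_surj bo : exists x, tv_cls x = bo.
Proof.
  assert (Htop := T_valid _ (fun I => true_top I)).
  destruct bo; [exists (cls (tTop cty)); apply tv_cls_cls; auto|].
  exists (cls (tNeg (tTop cty))). apply tv_cls_cls_false. rewrite T_neg. tauto.
Qed.

Lemma app_cls_ext a b (f g : eqclass (TArr a b)) : (forall x, app_cls f x = app_cls g x) -> f = g.
Proof.
  intros H. rewrite <- (cls_rep f), <- (cls_rep g). apply cls_eq, T_henkin; intros t.
  specialize (H (cls t)). rewrite <- (cls_rep f), <- (cls_rep g), !app_cls_cls in H.
  apply cls_eq in H. exact H.
Qed.

Lemma den_cls_var G a (v : var G a) e : den_cls (Var cty v) e = lookup eqclass v e.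
Proof. apply cls_rep. Qed.

Lemma den_cls_app G a b (s : tm G (TArr a b)) (t : tm G a) e :
  den_cls (App s t) e = app_cls (den_cls s e) (den_cls t e).
Proof. symmetry. apply app_cls_cls. Qed.

Lemma den_cls_lam G a b (t : tm (a :: G) b) e x : app_cls (den_cls (Lam t) e) x = den_cls t (x, e).
Proof.
  rewrite <- (cls_rep x) at 1. unfold den_cls. rewrite app_cls_cls. apply cls_eq, T_valid.
  intros I. apply true_eq. rewrite V_app. unfold V. cbn [subst]. rewrite den_lam.
  simpl. rewrite !den_subst. simpl. f_equal. f_equal.
  - apply den_var.
  - apply env_of_ext; intros c v. rewrite den_ren. reflexivity.
Qed.

Lemma den_cls_eq G a e (x y : eqclass a) :
  tv_cls (app_cls (app_cls (den_cls (EqC cty G a) e) x) y) = true <-> x = y.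
Proof.
  rewrite <- (cls_rep x), <- (cls_rep y). unfold den_cls; simpl.
  rewrite !app_cls_cls, tv_cls_cls. symmetry. apply cls_eq.
Qed.

Lemma tv_cls_connective (c : sentence -> sentence -> sentence) (op : bool -> bool -> bool) :
  (forall phi psi, T (c phi psi) <-> op (tv_cls (cls phi)) (tv_cls (cls psi)) = true) ->
  forall x y, tv_cls (cls (c (rep x) (rep y))) = op (tv_cls x) (tv_cls y).
Proof.
  intros Hc x y. rewrite <- (cls_rep x) at 2. rewrite <- (cls_rep y) at 2.
  destruct (tv_cls (cls (c (rep x) (rep y)))) eqn:E.
  - apply tv_cls_cls, Hc in E. auto.
  - apply tv_cls_cls_false in E. rewrite Hc in E. destruct (op _ _); tauto.
Qed.

Lemma den_cls_neg G e x : tv_cls (app_cls (den_cls (NegC cty G) e) x) = negb (tv_cls x).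
Proof.
  rewrite <- (cls_rep x). unfold den_cls; simpl. rewrite app_cls_cls.
  change (App (NegC cty nil) ?p) with (tNeg p).
  destruct (tv_cls (cls (rep x))) eqn:E; simpl.
  - apply tv_cls_cls_false. rewrite T_neg, <- tv_cls_cls, E. auto.
  - apply tv_cls_cls. rewrite T_neg, <- tv_cls_cls, E. discriminate.
Qed.

Lemma den_cls_or G e x y :
  tv_cls (app_cls (app_cls (den_cls (OrC cty G) e) x) y) = orb (tv_cls x) (tv_cls y).
Proof.
  rewrite <- (cls_rep x) at 1. rewrite <- (cls_rep y) at 1. unfold den_cls; simpl.
  rewrite !app_cls_cls. apply (tv_cls_connective (@tOr _ _ cty nil)).
  intros phi psi. rewrite T_or, <- !tv_cls_cls, Bool.orb_true_iff. tauto.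
Qed.

Lemma den_cls_and G e x y :
  tv_cls (app_cls (app_cls (den_cls (AndC cty G) e) x) y) = andb (tv_cls x) (tv_cls y).
Proof.
  rewrite <- (cls_rep x) at 1. rewrite <- (cls_rep y) at 1. unfold den_cls; simpl.
  rewrite !app_cls_cls. apply (tv_cls_connective (@tAnd _ _ cty nil)).
  intros phi psi. rewrite T_and, <- !tv_cls_cls, Bool.andb_true_iff. tauto.
Qed.

Lemma den_cls_pi G a e (f : eqclass (TArr a TBool)) :
  tv_cls (app_cls (den_cls (PiC cty G a) e) f) = true <-> forall x, tv_cls (app_cls f x) = true.
Proof.
  rewrite <- (cls_rep f) at 1. unfold den_cls; simpl. rewrite app_cls_cls, tv_cls_cls.
  assert (Happ : forall t, tv_cls (app_cls f (cls t)) = true <-> T (App (rep f) t)).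
  { intros t. rewrite <- (cls_rep f) at 1. rewrite app_cls_cls. apply tv_cls_cls. }
  split.
  - intros H x. rewrite <- (cls_rep x), Happ. apply (T_entails1 _ _ H); intros I HI.
    unfold true_in in *. rewrite V_app in *. exact (proj1 (den_pi I nil a tt _) HI _).
  - intros H. assert (HK := T_eq_const_true _ _ (fun t => proj1 (Happ t) (H (cls t)))).
    apply (T_entails1 _ _ HK); intros I HI. apply true_eq in HI.
    unfold true_in. rewrite V_app. apply den_pi; intros y.
    rewrite HI. apply const_true_app.
Qed.

Lemma eqclass_base_inhabited b : inhabited (eqclass (TBase b)).
Proof. destruct (T_inhabited b) as [t]. exact (inhabits (cls t)). Qed.

Definition term_model : interp := {|
  D := eqclass; D_base_ne := eqclass_base_inhabited;
  tv := tv_cls; tv_inj := tv_cls_inj; tv_surj := tv_cls_surj;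
  Defs.app := @app_cls; app_ext := app_cls_ext;
  cval := fun c => cls (Con cty nil c); den := @den_cls;
  den_var := den_cls_var; den_con := fun _ _ _ => eq_refl; den_app := den_cls_app;
  den_lam := den_cls_lam; den_eq := den_cls_eq; den_neg := den_cls_neg;
  den_or := den_cls_or; den_and := den_cls_and; den_pi := den_cls_pi |}.

Lemma V_term_model a (t : ctm a) : V term_model t = cls t.
Proof.
  apply cls_eq, T_valid; intros I. apply true_eq.
  unfold V. rewrite den_subst. reflexivity.
Qed.

Lemma term_model_true phi : true_in term_model phi <-> T phi.
Proof. unfold true_in. rewrite V_term_model. apply tv_cls_cls. Qed.

Lemma term_model_separating : separating term_model.
Proof.
  intros a b r s H. apply NNPP; intros H'. apply H. rewrite !V_term_model.
  apply cls_eq, T_henkin; intros t. apply cls_eq. rewrite <- !V_term_model.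
  apply NNPP; eauto.
Qed.

End TermModel.

Lemma tEq_inj a (r s : ctm a) a' (r' s' : ctm a') :
  tEq r s = tEq r' s' -> existT (fun c => ctm c * ctm c)%type a (r, s) = existT _ a' (r', s').
Proof.
  intros H. injection H; intros Hs Hr Ha; subst a'.
  apply inj_pair2 in Hr, Hs; subst; reflexivity.
Qed.

(** * Countability of the syntax *)

Section Countable.
Variables (fB : B -> nat) (fC : C -> nat).
Hypotheses (fB_inj : forall x y, fB x = fB y -> x = y) (fC_inj : forall x y, fC x = fC y -> x = y).

Definition pair_nat (x y : nat) : nat := Cantor.to_nat (x, y).

Lemma pair_nat_inj x y x' y' : pair_nat x y = pair_nat x' y' -> x = x' /\ y = y'.
Proof.
  unfold pair_nat; intros H. apply (f_equal Cantor.of_nat) in H.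
  rewrite !Cantor.cancel_of_to in H. injection H; auto.
Qed.

Fixpoint enc_ty (a : ty B) : nat :=
  match a with
  | TBase b => pair_nat 0 (fB b)
  | TBool => pair_nat 1 0
  | TArr a b => pair_nat 2 (pair_nat (enc_ty a) (enc_ty b))
  end.

Lemma enc_ty_inj a a' : enc_ty a = enc_ty a' -> a = a'.
Proof.
  revert a'; induction a; intros a' H; destruct a'; simpl in H;
    apply pair_nat_inj in H; destruct H as [H1 H2]; try discriminate.
  - f_equal; auto.
  - auto.
  - apply pair_nat_inj in H2; destruct H2. f_equal; auto.
Qed.

Fixpoint enc_var {G : list (ty B)} {a : ty B} (v : var G a) : nat :=
  match v with
  | Vz _ _ => pair_nat 0 0
  | Vs _ v' => pair_nat 1 (enc_var v')
  end.

Lemma enc_var_inj G a (v : var G a) : forall G' a' (v' : var G' a'), G = G' ->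
  enc_var v = enc_var v' ->
  existT (fun p : list (ty B) * ty B => var (fst p) (snd p)) (G, a) v = existT _ (G', a') v'.
Proof.
  induction v; intros G' a' v'; destruct v'; simpl; intros HG H; apply pair_nat_inj in H;
    destruct H as [H1 H2]; try discriminate; injection HG; intros; subst; [reflexivity|].
  apply (IHv _ _ v' eq_refl) in H2.
  assert (E := f_equal (@projT1 _ _) H2); simpl in E; injection E; intros; subst.
  apply inj_pair2 in H2; subst; reflexivity.
Qed.

Fixpoint enc_tm {G a} (t : tm G a) : nat :=
  match t with
  | Var _ v => pair_nat 0 (enc_var v)
  | Con _ _ c => pair_nat 1 (fC c)
  | EqC _ _ a => pair_nat 2 (enc_ty a)
  | NegC _ _ => pair_nat 3 0
  | OrC _ _ => pair_nat 4 0
  | AndC _ _ => pair_nat 5 0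
  | PiC _ _ a => pair_nat 6 (enc_ty a)
  | @App _ _ _ _ a _ s u => pair_nat 7 (pair_nat (enc_ty a) (pair_nat (enc_tm s) (enc_tm u)))
  | @Lam _ _ _ _ a _ t => pair_nat 8 (pair_nat (enc_ty a) (enc_tm t))
  end.

Lemma enc_tm_inj G a (t : tm G a) : forall a' (t' : tm G a'),
  enc_tm t = enc_tm t' -> existT (fun c => tm G c) a t = existT _ a' t'.
Proof.
  induction t; intros a' t'; destruct t'; simpl; intro H; apply pair_nat_inj in H;
    destruct H as [H1 H2]; try discriminate.
  - apply (enc_var_inj _ _ _ _ _ _ eq_refl) in H2.
    assert (E := f_equal (@projT1 _ _) H2); simpl in E; injection E; intros; subst.
    apply inj_pair2 in H2; subst; reflexivity.
  - apply fC_inj in H2; subst; reflexivity.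
  - apply enc_ty_inj in H2; subst; reflexivity.
  - reflexivity.
  - reflexivity.
  - reflexivity.
  - apply enc_ty_inj in H2; subst; reflexivity.
  - apply pair_nat_inj in H2; destruct H2 as [H2 H3]. apply pair_nat_inj in H3.
    destruct H3 as [H3 H4]. apply enc_ty_inj in H2; subst.
    apply IHt1 in H3. apply IHt2 in H4.
    assert (E := f_equal (@projT1 _ _) H3); simpl in E; injection E; intros; subst.
    apply inj_pair2 in H3, H4; subst; reflexivity.
  - apply pair_nat_inj in H2; destruct H2 as [H2 H3]. apply enc_ty_inj in H2; subst.
    apply IHt in H3. assert (E := f_equal (@projT1 _ _) H3); simpl in E; subst.
    apply inj_pair2 in H3; subst; reflexivity.
Qed.
End Countable.

Lemma countable_sentence : countable B -> countable C -> countable sentence.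
Proof.
  intros [fB hB] [fC hC]. exists (enc_tm fB fC). intros phi psi H.
  apply (enc_tm_inj fB fC hB hC) in H. apply inj_pair2 in H; auto.
Qed.

(** * Borel sets of separating interpretations *)

Lemma hat_borel_ind (e : nat -> sentence) : (forall phi, exists n, e n = phi) ->
  forall S, is_sigma_algebra S -> (forall phi, S (Mod phi)) ->
  forall A, hat_borel cty A -> S A.
Proof.
  intros e_surj S HS HMod A HA. apply HA; auto. intros U [F HF].
  replace U with (fun I => exists n, F (e n) /\ Mod (e n) I).
  - apply HS; intros n. destruct (classic (F (e n))) as [h|h].
    + replace (fun I => F (e n) /\ Mod (e n) I) with (Mod (e n)) by (apply pred_ext; tauto).
      auto.
    + replace (fun I => F (e n) /\ Mod (e n) I) with (fun _ : sep_interp cty => False)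
        by (apply pred_ext; tauto).
      apply sigma_empty; auto.
  - apply pred_ext; intros I. rewrite HF. split; [firstorder|].
    intros [phi [h1 h2]]. destruct (e_surj phi) as [n <-]. eauto.
Qed.

Lemma hat_borel_prob_unique (e : nat -> sentence) : (forall phi, exists n, e n = phi) ->
  forall P Q, is_prob_measure (hat_borel cty) P -> is_prob_measure (hat_borel cty) Q ->
  (forall phi, P (Mod phi) = Q (Mod phi)) -> forall A, hat_borel cty A -> P A = Q A.
Proof.
  intros e_surj P Q HP HQ HPQ A HA.
  apply (prob_measure_unique _ (fun A => exists phi, A = Mod phi) (hat_borel cty));
    auto.
  - intros A1 A2 [phi ->] [psi ->]. exists (tAnd phi psi). apply pred_ext; intros I.
    unfold Mod. rewrite true_and. tauto.
  - apply sigma_gen_sigma.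
  - intros A0 [phi ->]. apply sigma_gen_base. exists (fun psi => psi = phi).
    firstorder congruence.
  - intros A0 [phi ->]. apply HPQ.
  - apply (hat_borel_ind e e_surj); [apply sigma_gen_sigma| |exact HA].
    intros phi. apply sigma_gen_base. eauto.
Qed.

Section Probability.
Variable mu : sentence -> R.
Hypothesis mu_prob : prob_on_sentences mu.

Lemma mu_ge0 phi : 0 <= mu phi.
Proof. apply mu_prob. Qed.

Lemma mu_valid phi : (forall I, true_in I phi) -> mu phi = 1.
Proof. apply mu_prob. Qed.

Lemma mu_add phi psi : (forall I, true_in I phi -> true_in I psi -> False) ->
  mu (tOr phi psi) = mu phi + mu psi.
Proof.
  intros H; apply mu_prob; intros I. apply true_neg; intros H'.
  apply true_and in H'. destruct H'; eauto.
Qed.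

Lemma mu_neg phi : mu (tNeg phi) = 1 - mu phi.
Proof.
  assert (H : mu (tOr phi (tNeg phi)) = 1).
  { apply mu_valid; intros I. rewrite true_or, true_neg. apply classic. }
  rewrite mu_add in H; [lra|]. intros I H1 H2; apply true_neg in H2; auto.
Qed.

Lemma mu_equiv phi psi : (forall I, true_in I phi <-> true_in I psi) -> mu phi = mu psi.
Proof.
  intros H. assert (H1 : mu (tOr psi (tNeg phi)) = 1).
  { apply mu_valid; intros I. rewrite true_or, true_neg, <- H. apply classic. }
  rewrite mu_add, mu_neg in H1; [lra|].
  intros I H2 H3. apply true_neg in H3. apply H3, H, H2.
Qed.

Lemma mu_unsat phi : (forall I, ~ true_in I phi) -> mu phi = 0.
Proof.
  intros H. assert (H1 : mu (tNeg phi) = 1) by (apply mu_valid; intros I; apply true_neg, H).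
  rewrite mu_neg in H1; lra.
Qed.

Lemma mu_split L phi : mu L = mu (tAnd L phi) + mu (tAnd L (tNeg phi)).
Proof.
  rewrite <- mu_add.
  - apply mu_equiv; intros I. rewrite true_or, !true_and, true_neg.
    destruct (classic (true_in I phi)); tauto.
  - intros I H1 H2. rewrite true_and in H1, H2. rewrite true_neg in H2. tauto.
Qed.

Lemma mu_mono phi psi : (forall I, true_in I phi -> true_in I psi) -> mu phi <= mu psi.
Proof.
  intros H. rewrite (mu_split psi phi), (mu_equiv (tAnd psi phi) phi).
  - pose proof (mu_ge0 (tAnd psi (tNeg phi))); lra.
  - intros I. rewrite true_and. split; [tauto|auto].
Qed.

Lemma mu_top : mu (tTop cty) = 1.
Proof. apply mu_valid, true_top. Qed.

(** * Theories chosen by the points of [[0, 1)] *)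

Variable e : nat -> sentence.
Hypothesis e_surj : forall phi, exists n, e n = phi.

(** A pair [(lo, L)] stands for the window [[lo, lo + mu L)]; a step splits it into
    the parts of lengths [mu (L /\ e k)] and [mu (L /\ ~ e k)] and keeps the one
    containing [x]. *)
Definition step (x : R) (k : nat) (p : R * sentence) : R * sentence :=
  if Rlt_dec x (fst p + mu (tAnd (snd p) (e k))) then (fst p, tAnd (snd p) (e k))
  else (fst p + mu (tAnd (snd p) (e k)), tAnd (snd p) (tNeg (e k))).

Fixpoint run (x : R) (m n : nat) (p : R * sentence) : R * sentence :=
  match m with O => p | S m => run x m (S n) (step x n p) end.

Lemma run_S x m : forall n p, run x (S m) n p = step x (n + m) (run x m n p).
Proof.
  induction m; intros n p; [simpl; rewrite Nat.add_0_r; reflexivity|].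
  change (run x (S (S m)) n p) with (run x (S m) (S n) (step x n p)).
  rewrite IHm. replace (S n + m)%nat with (n + S m)%nat by lia. reflexivity.
Qed.

Definition window (p : R * sentence) (x : R) : Prop := fst p <= x < fst p + mu (snd p).

Lemma window_step x k p : window p x -> window (step x k p) x.
Proof.
  unfold window, step; intros [H1 H2]. rewrite (mu_split (snd p) (e k)) in H2.
  destruct (Rlt_dec _ _); simpl; lra.
Qed.

Definition stage (x : R) (m : nat) : R * sentence := run x m 0 (0, tTop cty).

Lemma stage_S x m : stage x (S m) = step x m (stage x m).
Proof. unfold stage. rewrite run_S. reflexivity. Qed.

Lemma window_stage x m : ico01 x -> window (stage x m) x.
Proof.
  intros [H1 H2]. induction m.
  - unfold window, stage; simpl. rewrite mu_top. lra.
  - rewrite stage_S. apply window_step; auto.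
Qed.

Definition accepts (x : R) (k : nat) : Prop :=
  x < fst (stage x k) + mu (tAnd (snd (stage x k)) (e k)).

Lemma stage_literal x m I : true_in I (snd (stage x m)) -> forall k, (k < m)%nat ->
  (accepts x k -> true_in I (e k)) /\ (~ accepts x k -> true_in I (tNeg (e k))).
Proof.
  induction m; intros H k Hk; [lia|].
  rewrite stage_S in H. unfold step in H. unfold accepts at 1 2.
  destruct (Rlt_dec _ _); simpl in H; apply true_and in H; destruct H as [H1 H2];
    (destruct (Nat.eq_dec k m) as [->|hk]; [split; tauto|apply IHm; auto; lia]).
Qed.

Lemma stage_satisfiable x m : ico01 x -> exists I, true_in I (snd (stage x m)).
Proof.
  intros Hx. apply NNPP; intros H.
  assert (H0 : mu (snd (stage x m)) = 0) by (apply mu_unsat; eauto).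
  destruct (window_stage x m Hx); lra.
Qed.

Definition theory (x : R) (phi : sentence) : Prop := exists k, e k = phi /\ accepts x k.

Lemma theory_bound x l : (forall phi, In phi l -> theory x phi) ->
  exists m, forall phi, In phi l -> exists k, (k < m)%nat /\ e k = phi /\ accepts x k.
Proof.
  induction l as [|psi l IH]; intros H; [exists O; intros phi []|].
  destruct IH as [m Hm]; [intros; apply H; right; auto|].
  destruct (H psi (or_introl eq_refl)) as [k [hk1 hk2]].
  exists (S (Nat.max m k)). intros phi [<-|Hin].
  - exists k. split; [lia|auto].
  - destruct (Hm phi Hin) as [j [hj1 hj2]]. exists j. split; [lia|auto].
Qed.

Lemma theory_fsat x : ico01 x ->
  forall l, (forall phi, In phi l -> theory x phi) -> exists I, satisfies I l.
Proof.
  intros Hx l Hl. destruct (theory_bound x l Hl) as [m Hm].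
  destruct (stage_satisfiable x m Hx) as [I HI]. exists I; intros phi Hin.
  destruct (Hm phi Hin) as [k [hk [<- hd]]].
  apply (stage_literal x m I HI k hk); auto.
Qed.

Lemma stage_literal2 x j k : ico01 x -> exists I,
  (accepts x j -> true_in I (e j)) /\ (~ accepts x j -> true_in I (tNeg (e j))) /\
  (accepts x k -> true_in I (e k)) /\ (~ accepts x k -> true_in I (tNeg (e k))).
Proof.
  intros Hx. destruct (stage_satisfiable x (S (Nat.max j k)) Hx) as [I HI]. exists I.
  destruct (stage_literal x _ I HI j ltac:(lia)), (stage_literal x _ I HI k ltac:(lia)).
  tauto.
Qed.

Lemma theory_complete x : ico01 x -> forall phi, theory x phi \/ theory x (tNeg phi).
Proof.
  intros Hx phi. destruct (e_surj phi) as [k hk], (e_surj (tNeg phi)) as [j hj].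
  destruct (classic (accepts x k)) as [h1|h1]; [left; exists k; auto|].
  destruct (classic (accepts x j)) as [h2|h2]; [right; exists j; auto|].
  exfalso. destruct (stage_literal2 x j k Hx) as [I HI]. rewrite hj, hk, !true_neg in HI.
  tauto.
Qed.

Lemma theory_accepts x k : ico01 x -> theory x (e k) <-> accepts x k.
Proof.
  intros Hx. split; [|intros; exists k; auto].
  intros [j [hj hd]]. apply NNPP; intros hn.
  destruct (stage_literal2 x j k Hx) as [I HI]. rewrite hj, true_neg in HI. tauto.
Qed.

Definition accept_region (m n : nat) (p : R * sentence) (psi : sentence) (x : R) : Prop :=
  window p x /\ x < fst (run x m n p) + mu (tAnd (snd (run x m n p)) psi).

Lemma accept_region_S m n lo L psi x :
  accept_region (S m) n (lo, L) psi x <->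
  accept_region m (S n) (lo, tAnd L (e n)) psi x \/
  accept_region m (S n) (lo + mu (tAnd L (e n)), tAnd L (tNeg (e n))) psi x.
Proof.
  unfold accept_region, window. simpl. rewrite (mu_split L (e n)). unfold step; simpl.
  pose proof (mu_ge0 (tAnd L (e n))). pose proof (mu_ge0 (tAnd L (tNeg (e n)))).
  destruct (Rlt_dec x (lo + mu (tAnd L (e n)))) as [h|h]; simpl; split.
  - intros [[h1 h2] h3]; left; repeat split; auto; lra.
  - intros [[[h1 h2] h3]|[[h1 h2] h3]]; [repeat split; auto; lra|lra].
  - intros [[h1 h2] h3]; right; repeat split; auto; lra.
  - intros [[[h1 h2] h3]|[[h1 h2] h3]]; [lra|repeat split; auto; lra].
Qed.

Lemma accept_region_measure m : forall n p psi, 0 <= fst p -> fst p + mu (snd p) <= 1 ->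
  borel (accept_region m n p psi) /\
  lambda01 (accept_region m n p psi) = mu (tAnd (snd p) psi).
Proof.
  induction m as [|m IH]; intros n [lo L] psi H0 H1; simpl in H0, H1.
  - assert (Hle : mu (tAnd L psi) <= mu L)
      by (apply mu_mono; intros I HI; apply true_and in HI; tauto).
    assert (E : forall x, accept_region 0 n (lo, L) psi x <-> lo <= x < lo + mu (tAnd L psi))
      by (intros x; unfold accept_region, window; simpl; lra).
    split; [eapply borel_ext; [intros x; symmetry; apply E|apply borel_ico]|].
    rewrite (lambda01_ext _ _ (fun x _ => E x)), lambda01_ico;
      pose proof (mu_ge0 (tAnd L psi)); simpl; lra.
  - pose proof (mu_split L (e n)). pose proof (mu_ge0 (tAnd L (e n))).
    pose proof (mu_ge0 (tAnd L (tNeg (e n)))).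
    destruct (IH (S n) (lo, tAnd L (e n)) psi) as [M1 L1]; simpl; try lra.
    destruct (IH (S n) (lo + mu (tAnd L (e n)), tAnd L (tNeg (e n))) psi) as [M2 L2];
      simpl; try lra.
    simpl in L1, L2. split.
    + eapply borel_ext; [intros x; symmetry; apply accept_region_S|].
      apply borel_or; auto.
    + rewrite (lambda01_ext _ _ (fun x _ => accept_region_S m n lo L psi x)).
      rewrite lambda01_add, L1, L2, (mu_split (tAnd L psi) (e n)); auto.
      * f_equal; apply mu_equiv; intros I; rewrite !true_and; tauto.
      * intros x [[_ h1] _] [[h2 _] _]; simpl in *; lra.
Qed.

Definition truth_set (phi : sentence) (x : R) : Prop := ico01 x /\ theory x phi.

Lemma truth_set_measure phi :
  borel (truth_set phi) /\ lambda01 (truth_set phi) = mu phi.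
Proof.
  destruct (e_surj phi) as [k <-].
  destruct (accept_region_measure k O (0, tTop cty) (e k)) as [M L]; simpl; rewrite ?mu_top; try lra.
  assert (E : forall x, accept_region k 0 (0, tTop cty) (e k) x <-> truth_set (e k) x).
  { intros x. unfold accept_region, window, truth_set. simpl. rewrite mu_top.
    split; intros [Hx h].
    - assert (Hx' : ico01 x) by (unfold ico01; lra).
      split; auto. apply theory_accepts; auto.
    - rewrite theory_accepts in h; auto. unfold ico01 in Hx. split; [lra|exact h]. }
  split; [eapply borel_ext; [exact E|exact M]|].
  rewrite <- (lambda01_ext _ _ (fun x _ => E x)), L. simpl.
  apply mu_equiv; intros I; rewrite true_and. split; [tauto|]. intros; split; auto using true_top.
Qed.

(** * Henkin gaps are null *)

Definition eq_conj a b (r s : ctm (TArr a b)) (l : list (ctm a)) : sentence :=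
  bigAnd (map (fun t => tEq (App r t) (App s t)) l).

Hypothesis mu_gaifman : gaifman mu.

Lemma gaifman_approx a b (r s : ctm (TArr a b)) eps : 0 < eps ->
  exists l, mu (eq_conj a b r s l) < mu (tEq r s) + eps.
Proof. apply mu_gaifman. Qed.

Lemma mu_eq_conj_gap a b (r s : ctm (TArr a b)) l :
  mu (tAnd (eq_conj a b r s l) (tNeg (tEq r s))) = mu (eq_conj a b r s l) - mu (tEq r s).
Proof.
  rewrite (mu_split (eq_conj a b r s l) (tEq r s)).
  rewrite (mu_equiv (tAnd (eq_conj a b r s l) (tEq r s)) (tEq r s)); [ring|].
  intros I. rewrite true_and. split; [tauto|]. intros H; split; auto.
  apply true_bigAnd. intros phi Hin. apply in_map_iff in Hin. destruct Hin as [t [<- _]].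
  apply true_eq in H. apply true_eq. rewrite !V_app, H. reflexivity.
Qed.

(** The Gaifman condition forces closed terms of every base type: otherwise the only
    finite family of arguments is empty, which would give the unsatisfiable sentence
    [(fun y => y = y) = (fun y => ~ y = y)] probability [1]. *)
Lemma base_closed_term b : inhabited (ctm (TBase b)).
Proof.
  apply NNPP; intro hn.
  pose (y := Var cty (Vz nil (TBase b))).
  destruct (gaifman_approx _ _ (Lam (tEq y y)) (Lam (tNeg (tEq y y))) (1/2)) as [[|t l] hl];
    [lra| |apply hn; constructor; exact t].
  unfold eq_conj in hl; simpl in hl. rewrite mu_top in hl.
  enough (mu (tEq (Lam (tEq y y)) (Lam (tNeg (tEq y y)))) = 0) by lra.
  apply mu_unsat. intros I HI. apply true_eq in HI. destruct (D_base_ne I b) as [z].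
  apply (f_equal (fun f => tv I (ap I f z))) in HI. unfold V in HI.
  rewrite !den_lam in HI. unfold tEq, tNeg in HI. rewrite !den_app, den_neg in HI.
  assert (Hz : forall w,
             tv I (ap I (ap I (den I (EqC cty (TBase b :: nil) (TBase b)) (z, tt)) w) w) = true)
    by (intros; apply den_eq; reflexivity).
  rewrite Hz in HI. discriminate.
Qed.

Definition henkin_gap a b (r s : ctm (TArr a b)) (x : R) : Prop :=
  ico01 x /\ ~ theory x (tEq r s) /\ forall t, theory x (tEq (App r t) (App s t)).

Lemma henkin_gap_truth_set a b (r s : ctm (TArr a b)) x l :
  henkin_gap a b r s x -> truth_set (tAnd (eq_conj a b r s l) (tNeg (tEq r s))) x.
Proof.
  intros [Hx [h1 h2]]. split; auto.
  pose proof (theory_fsat x Hx) as Hfsat. pose proof (theory_complete x Hx) as Hcompl.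
  apply (T_and _ Hfsat Hcompl); split.
  - apply (T_entails _ Hfsat Hcompl (map (fun t => tEq (App r t) (App s t)) l)).
    + intros phi Hin; apply in_map_iff in Hin; destruct Hin as [t [<- _]]; apply h2.
    + intros I HI; apply true_bigAnd; exact HI.
  - apply (T_neg _ Hfsat Hcompl); auto.
Qed.

Lemma borel_henkin_gap a b (r s : ctm (TArr a b)) : borel (henkin_gap a b r s).
Proof.
  pose (W n x := ico01 x /\ forall t, e n = tEq (App r t) (App s t) -> theory x (e n)).
  assert (HW : forall n, borel (W n)).
  { intros n. destruct (classic (exists t, e n = tEq (App r t) (App s t))) as [[t0 ht]|hn].
    - eapply borel_ext; [|exact (proj1 (truth_set_measure (e n)))].
      intros x; unfold W, truth_set; split; intros [Hx H]; split; auto.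
      exact (H t0 ht).
    - eapply borel_ext; [|exact borel_ico01].
      intros x; unfold W; split; [intros Hx; split; auto|intros [Hx _]; auto].
      intros t ht; exfalso; eauto. }
  eapply borel_ext with
    (A := fun x => ico01 x /\ ~ truth_set (tEq r s) x /\ forall n, W n x).
  - intros x; unfold henkin_gap, truth_set, W; split.
    + intros [Hx [h1 h2]]. split; [exact Hx|split; [tauto|]]. intros t.
      destruct (e_surj (tEq (App r t) (App s t))) as [n hn].
      destruct (h2 n) as [_ H]. rewrite <- hn. eauto.
    + intros [Hx [h1 h2]]. split; [exact Hx|split; [tauto|]]. intros n; split; auto.
      intros t ->. apply h2.
  - apply borel_and; [apply borel_ico01|].
    apply borel_and; [apply borel_not, truth_set_measure|].
    apply borel_all; auto.
Qed.

Lemma lambda01_henkin_gap a b (r s : ctm (TArr a b)) : lambda01 (henkin_gap a b r s) = 0.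
Proof.
  apply Rle_antisym; [|apply lambda01_ge0]. apply Rnot_lt_le; intros hpos.
  destruct (gaifman_approx a b r s _ hpos) as [l hl].
  assert (H : lambda01 (henkin_gap a b r s)
              <= lambda01 (truth_set (tAnd (eq_conj a b r s l) (tNeg (tEq r s))))).
  { apply lambda01_le; [apply borel_henkin_gap|apply truth_set_measure|].
    intros x; apply henkin_gap_truth_set. }
  rewrite (proj2 (truth_set_measure _)), mu_eq_conj_gap in H. lra.
Qed.

Definition henkin_gap_at (n : nat) (x : R) : Prop :=
  exists a b (r s : ctm (TArr a b)), e n = tEq r s /\ henkin_gap a b r s x.

Lemma henkin_gap_at_null n :
  borel (henkin_gap_at n) /\ lambda01 (henkin_gap_at n) = 0.
Proof.
  destruct (classic (exists a b (r s : ctm (TArr a b)), e n = tEq r s))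
    as [[a [b [r [s hrs]]]]|hn].
  - assert (E : forall x, henkin_gap a b r s x <-> henkin_gap_at n x).
    { intros x; split; [intros h; exists a, b, r, s; auto|].
      intros [a' [b' [r' [s' [he hg]]]]]. rewrite hrs in he. apply tEq_inj in he.
      assert (E := f_equal (@projT1 _ _) he); simpl in E; injection E; intros; subst.
      apply inj_pair2 in he; injection he; intros; subst; auto. }
    split; [eapply borel_ext; [exact E|apply borel_henkin_gap]|].
    rewrite <- (lambda01_ext _ _ (fun x _ => E x)). apply lambda01_henkin_gap.
  - assert (E : forall x, 0 <= x < 0 <-> henkin_gap_at n x).
    { intros x; split; [lra|]. intros [a [b [r [s [he _]]]]]. exfalso; eauto 6. }
    split; [eapply borel_ext; [exact E|apply borel_ico]|].
    rewrite <- (lambda01_ext _ _ (fun x _ => E x)), lambda01_ico; lra.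
Qed.

Definition non_henkin (x : R) : Prop := exists n, henkin_gap_at n x.

Lemma non_henkin_null : borel non_henkin /\ lambda01 non_henkin = 0.
Proof.
  split; [apply borel_ex|apply lambda01_null_union];
    intros n; apply henkin_gap_at_null.
Qed.

Definition good (x : R) : Prop := ico01 x /\ ~ non_henkin x.

Lemma theory_henkin x : good x -> forall a b (r s : ctm (TArr a b)),
  (forall t, theory x (tEq (App r t) (App s t))) -> theory x (tEq r s).
Proof.
  intros [Hx hb] a b r s H. apply NNPP; intros hn. apply hb.
  destruct (e_surj (tEq r s)) as [n hn']. exists n, a, b, r, s. split; [auto|].
  split; [exact Hx|split; auto].
Qed.

Lemma good_exists : exists x, good x.
Proof.
  apply NNPP; intros H.
  assert (Hle : lambda01 ico01 <= lambda01 non_henkin).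
  { apply lambda01_le; [apply borel_ico01|apply non_henkin_null|].
    intros x Hx. apply NNPP; intros hn. apply H. exists x; split; auto. }
  rewrite (lambda01_ext ico01 (fun _ => True)) in Hle by tauto.
  rewrite lambda01_total, (proj2 non_henkin_null) in Hle. lra.
Qed.

(** * The pushforward measure *)

Definition point_model (x : R) (h : good x) : interp :=
  term_model (theory x) (theory_fsat x (proj1 h)) (theory_complete x (proj1 h))
    (theory_henkin x h) base_closed_term.

Lemma point_model_separating x h : separating (point_model x h).
Proof. apply term_model_separating. Qed.

Definition default_point : sep_interp cty :=
  let x := proj1_sig (constructive_indefinite_description _ good_exists) in
  let h := proj2_sig (constructive_indefinite_description _ good_exists) in
  exist _ (point_model x h) (point_model_separating x h).

Definition interp_at (x : R) : sep_interp cty :=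
  match excluded_middle_informative (good x) with
  | left h => exist _ (point_model x h) (point_model_separating x h)
  | right _ => default_point
  end.

Lemma Mod_interp_at_good x phi : good x -> Mod phi (interp_at x) <-> theory x phi.
Proof.
  intros h. unfold interp_at. destruct (excluded_middle_informative (good x)); [|contradiction].
  apply term_model_true.
Qed.

Definition pullback (A : sep_interp cty -> Prop) (x : R) : Prop :=
  ico01 x /\ A (interp_at x).

Lemma pullback_Mod phi x : pullback (Mod phi) x <->
  (truth_set phi x /\ ~ non_henkin x) \/
  ((ico01 x /\ non_henkin x) /\ Mod phi default_point).
Proof.
  unfold pullback, truth_set. destruct (classic (good x)) as [h|h].
  - rewrite Mod_interp_at_good by auto. destruct h. tauto.
  - unfold interp_at. destruct (excluded_middle_informative (good x)); [contradiction|].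
    unfold good in h. destruct (classic (non_henkin x)); tauto.
Qed.

Lemma borel_pullback_Mod phi : borel (pullback (Mod phi)).
Proof.
  eapply borel_ext; [intros x; symmetry; apply pullback_Mod|].
  pose proof non_henkin_null as [hN _]. pose proof (truth_set_measure phi) as [hT _].
  apply borel_or; [apply borel_and, borel_not; auto|].
  destruct (classic (Mod phi default_point)).
  - eapply borel_ext; [|apply borel_and; [apply borel_ico01|exact hN]].
    intros x; tauto.
  - eapply borel_ext; [|exact (borel_ico 0 0)]. intros x; split; [lra|tauto].
Qed.

Lemma lambda01_pullback_Mod phi : lambda01 (pullback (Mod phi)) = mu phi.
Proof.
  rewrite <- (proj2 (truth_set_measure phi)).
  apply (lambda01_eq_off_null non_henkin); try apply non_henkin_null;
    [apply borel_pullback_Mod|apply truth_set_measure|].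
  intros x hx hn. rewrite pullback_Mod. tauto.
Qed.

Lemma pullback_sigma : is_sigma_algebra (fun A => borel (pullback A)).
Proof.
  unfold pullback; split; [|split].
  - eapply borel_ext; [|exact borel_ico01]. intros x; tauto.
  - intros A h. eapply borel_ext;
      [|exact (borel_and _ _ borel_ico01 (borel_not _ h))].
    intros x; tauto.
  - intros F hF. eapply borel_ext; [|exact (borel_ex _ hF)].
    intros x; split; [intros [n [Hx h]]; split; eauto|intros [Hx [n h]]; eauto].
Qed.

Definition pushforward (A : sep_interp cty -> Prop) : R := lambda01 (pullback A).

Lemma pushforward_prob : is_prob_measure (hat_borel cty) pushforward.
Proof.
  assert (Hb : forall A, hat_borel cty A -> borel (pullback A))
    by (apply (hat_borel_ind e e_surj); [apply pullback_sigma|apply borel_pullback_Mod]).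
  split; [|split].
  - intros A _; apply lambda01_ge0.
  - unfold pushforward. rewrite <- lambda01_total.
    apply lambda01_ext; unfold pullback; tauto.
  - intros F hF hd. unfold pushforward.
    rewrite (lambda01_ext _ (fun x => exists n, pullback (F n) x)).
    2: { unfold pullback; intros x Hx; split; [intros [_ [n h]]|intros [n [_ h]]]; eauto. }
    apply lambda01_sigma; [intros n; apply Hb, hF|].
    intros m n x hmn [_ h1] [_ h2]. eapply hd; eauto.
Qed.

End Probability.
End Syntax.

Theorem mainTheorem13 (B C : Type) (cty : C -> ty B)
  (HB : countable B) (HC : countable C) (mu : sentence cty -> R) :
  prob_on_sentences mu -> gaifman mu ->
  exists P : (sep_interp cty -> Prop) -> R,
    is_prob_measure (hat_borel cty) P /\
    (forall phi : sentence cty, P (Mod phi) = mu phi) /\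
    (forall Q : (sep_interp cty -> Prop) -> R,
        is_prob_measure (hat_borel cty) Q ->
        (forall phi : sentence cty, Q (Mod phi) = mu phi) ->
        forall A, hat_borel cty A -> Q A = P A).
Proof.
  intros Hmu Hgaif.
  destruct (countable_enumeration _ (countable_sentence B C cty HB HC) (tTop cty)) as [e e_surj].
  exists (pushforward B C cty mu Hmu e e_surj Hgaif).
  split; [apply pushforward_prob|split; [apply lambda01_pullback_Mod|]].
  intros Q HQ HQMod A HA.
  apply (hat_borel_prob_unique B C cty e e_surj); [exact HQ|apply pushforward_prob| |exact HA].
  intros phi. rewrite HQMod. symmetry. apply lambda01_pullback_Mod.
Qed.
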